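(* Consider the coding-DNA embedding setting described in the context, and let $C_\mathrm{c}=\max_{p(x')} R_\mathrm{c}^{X'}$, the maximum over all probability distributions of $X'$ on $\mathcal{X}'$. Then $C_\mathrm{c}$ is achieved by a deterministic distribution of $X'$, namely the point mass $p(x')=\mathbb{1}[x'=\xi']$ at the amino acid $\xi'\in\mathcal{X}'$ for which the (maximised over $p(\mathbf{u}|\xi')$) output entropy $H(\mathbf{Z}_{(m)})$ is largest among the 21 deterministic distributions of $X'$.
   Context: Let $\mathcal{X}=\{\mathrm{A},\mathrm{C},\mathrm{T},\mathrm{G}\}$ (DNA bases); codons are elements of $\mathcal{X}^3$. Let $\mathcal{X}'=\{$Ala, Arg, Asn, Asp, Cys, Gln, Glu, Gly, His, Ile, Leu, Lys, Met, Phe, Pro, Ser, Thr, Trp, Tyr, Val, Stp$\}$. The genetic code is the map $\alpha:\mathcal{X}^3\to\mathcal{X}'$ whose fibres $\mathcal{S}_{x'}=\{\mathbf{x}\in\mathcal{X}^3:\alpha(\mathbf{x})=x'\}$ are: Ala: GCA, GCC, GCT, GCG; Arg: AGA, AGG, CGA, CGC, CGT, CGG; Asn: AAC, AAT; Asp: GAC, GAT; Cys: TGC, TGT; Gln: CAA, CAG; Glu: GAA, GAG; Gly: GGA, GGC, GGT, GGG; His: CAC, CAT; Ile: ATA, ATC, ATT; Leu: CTA, CTC, CTT, CTG, TTA, TTG; Lys: AAA, AAG; Met: ATG; Phe: TTC, TTT; Pro: CCA, CCC, CCT, CCG; Ser: AGC, AGT, TCA, TCC, TCT, TCG; Thr: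 ACA, ACC, ACT, ACG; Trp: TGG; Tyr: TAC, TAT; Val: GTA, GTC, GTT, GTG; Stp: TAA, TAG, TGA. These 21 sets partition $\mathcal{X}^3$. Mutation channel (Kimura model): for parameters $q\in[0,1]$ and $\gamma\in[0,3/2]$, the $4\times4$ base transition matrix $\Pi=[p(Z=z|Y=y)]$ (rows/columns ordered A, C, T, G) has diagonal entries $1-q$, entries $(1-2\gamma/3)q$ for the pairs $\{\mathrm{A},\mathrm{G}\}$ and $\{\mathrm{C},\mathrm{T}\}$, and entries $\gamma q/3$ for all other off-diagonal pairs. After $m\ge1$ cascaded independent mutation stages, a codon $\mathbf{u}$ is mapped to a random codon $\mathbf{Z}_{(m)}$ through the $64\times64$ transition matrix $\Pi^m\otimes\Pi^m\otimes\Pi^m$ (bases mutate independently). Achievable rate: given a distribution $p(x')$ of the host amino acid $X'$ on $\mathcal{X}'$, consider conditional distributions $p(\mathbf{u}|x')$ supported on $\mathcal{S}_{x'}$, and let $\mathbf{U}$ be the codon with $p(\mathbf{u})=p(x')p(\mathbf{u}|x')$ for $\mathbf{u}\in\mathcal{S}_{x'}$; $\mathbf{U}$ is the channel input and $\mathbf{Z}_{(m)}$ the output. The achievable rate is $R_\mathrm{c}^{X'}=\max_{p(\mathbf{u}|x')} I(\mathbf{Z}_{(m)};\mathbf{U})-H(X')$ bits/codon (logarithms base 2). *)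

From HB Require Import structures.
From mathcomp Require Import all_boot all_order all_algebra.
From mathcomp Require Import boolp classical_sets reals exp.
Set Implicit Arguments. Unset Strict Implicit. Unset Printing Implicit Defensive.
Import Order.TTheory GRing.Theory Num.Theory.
Local Open Scope ring_scope.

Inductive base := A | C | T | G.

Definition base_to_ord (b : base) : 'I_4 :=
  match b with A => inord 0 | C => inord 1 | T => inord 2 | G => inord 3 end.
Definition ord_to_base (i : 'I_4) : base :=
  match val i with 0 => A | 1 => C | 2 => T | _ => G end.
Lemma base_to_ordK : cancel base_to_ord ord_to_base.
Proof. by case; rewrite /ord_to_base /= inordK. Qed.
HB.instance Definition _ := Finite.copy base (can_type base_to_ordK).

Definition codon : finType := (base * base * base)%type.

Inductive aa := Ala | Arg | Asn | Asp | Cys | Gln | Glu | Gly | His | Ile | Leu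
  | Lys | Met | Phe | Pro | Ser | Thr | Trp | Tyr | Val | Stp.

Definition aa_to_ord (x : aa) : 'I_21 := inord (match x with
  | Ala => 0 | Arg => 1 | Asn => 2 | Asp => 3 | Cys => 4 | Gln => 5 | Glu => 6
  | Gly => 7 | His => 8 | Ile => 9 | Leu => 10 | Lys => 11 | Met => 12
  | Phe => 13 | Pro => 14 | Ser => 15 | Thr => 16 | Trp => 17 | Tyr => 18
  | Val => 19 | Stp => 20 end)%N.
Definition ord_to_aa (i : 'I_21) : aa := match val i with
  | 0 => Ala | 1 => Arg | 2 => Asn | 3 => Asp | 4 => Cys | 5 => Gln | 6 => Glu
  | 7 => Gly | 8 => His | 9 => Ile | 10 => Leu | 11 => Lys | 12 => Met
  | 13 => Phe | 14 => Pro | 15 => Ser | 16 => Thr | 17 => Trp | 18 => Tyr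
  | 19 => Val | _ => Stp end.
Lemma aa_to_ordK : cancel aa_to_ord ord_to_aa.
Proof. by case; rewrite /ord_to_aa /aa_to_ord /= inordK. Qed.
HB.instance Definition _ := Finite.copy aa (can_type aa_to_ordK).

Definition alpha (u : codon) : aa :=
  match u with
  | (A, A, A) => Lys | (A, A, C) => Asn | (A, A, T) => Asn | (A, A, G) => Lys
  | (A, C, _) => Thr
  | (A, T, A) => Ile | (A, T, C) => Ile | (A, T, T) => Ile | (A, T, G) => Met
  | (A, G, A) => Arg | (A, G, C) => Ser | (A, G, T) => Ser | (A, G, G) => Arg
  | (C, A, A) => Gln | (C, A, C) => His | (C, A, T) => His | (C, A, G) => Gln
  | (C, C, _) => Pro
  | (C, T, _) => Leu
  | (C, G, _) => Arg
  | (T, A, A) => Stp | (T, A, C) => Tyr | (T, A, T) => Tyr | (T, A, G) => Stp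
  | (T, C, _) => Ser
  | (T, T, A) => Leu | (T, T, C) => Phe | (T, T, T) => Phe | (T, T, G) => Leu
  | (T, G, A) => Stp | (T, G, C) => Cys | (T, G, T) => Cys | (T, G, G) => Trp
  | (G, A, A) => Glu | (G, A, C) => Asp | (G, A, T) => Asp | (G, A, G) => Glu
  | (G, C, _) => Ala
  | (G, T, _) => Val
  | (G, G, _) => Gly
  end.

Section Channel.
Variable R : realType.

Definition log2 (x : R) : R := ln x / ln 2.

(* Kimura base transition matrix Pi = [p(z|y)] *)
Definition transition (y z : base) : bool :=
  match y, z with
  | A, G | G, A | C, T | T, C => true | _, _ => false end.

Definition Pi (q gam : R) (y z : base) : R :=
  if y == z then 1 - q
  else if transition y z then (1 - 2 * gam / 3) * q
  else gam * q / 3.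

Fixpoint Pi_pow (q gam : R) (n : nat) (y z : base) : R :=
  match n with
  | 0%N => (y == z)%:R
  | n'.+1 => \sum_(w : base) Pi_pow q gam n' y w * Pi q gam w z
  end.

Definition W (q gam : R) (m : nat) (u z : codon) : R :=
  Pi_pow q gam m u.1.1 z.1.1 * Pi_pow q gam m u.1.2 z.1.2 *
  Pi_pow q gam m u.2 z.2.

Definition is_dist (X : finType) (p : X -> R) : Prop :=
  (forall x, 0 <= p x) /\ \sum_x p x = 1.

Definition is_cond (c : aa -> codon -> R) : Prop :=
  forall x', is_dist (c x') /\ (forall u, alpha u != x' -> c x' u = 0).

Definition delta (xi : aa) : aa -> R := fun x => (x == xi)%:R.

Definition entropy (X : finType) (p : X -> R) : R :=
  - \sum_x (if p x == 0 then 0 else p x * log2 (p x)).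

(* law of the input codon U: p(u) = p(x') p(u|x') for u in S_x' *)
Definition pU (p : aa -> R) (c : aa -> codon -> R) (u : codon) : R :=
  p (alpha u) * c (alpha u) u.

Definition pZ (q gam : R) (m : nat) (p : aa -> R) (c : aa -> codon -> R)
  (z : codon) : R := \sum_u pU p c u * W q gam m u z.

Definition mutinf (q gam : R) (m : nat) (p : aa -> R) (c : aa -> codon -> R) : R :=
  \sum_u \sum_z
    (if pU p c u * W q gam m u z == 0 then 0
     else pU p c u * W q gam m u z * log2 (W q gam m u z / pZ q gam m p c z)).

Definition Rc (q gam : R) (m : nat) (p : aa -> R) : R :=
  sup [set mutinf q gam m p c - entropy p | c in is_cond].

Definition Cc (q gam : R) (m : nat) : R :=
  sup [set Rc q gam m p | p in @is_dist aa].

Definition HZmax (q gam : R) (m : nat) (xi : aa) : R :=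
  sup [set entropy (pZ q gam m (delta xi) c) | c in is_cond].

End Channel.

From HB Require Import structures.
From mathcomp Require Import all_boot all_order all_algebra.
From mathcomp Require Import boolp classical_sets reals exp.
From mathcomp Require Import ring lra.
Import Order.TTheory GRing.Theory Num.Theory.
Local Open Scope ring_scope.

(* For any input law, I(Z;U) = H(Z) - H(Z|U), and H(Z|U) is the entropy h of a
   single row of the codon channel: identifying the bases with the Klein
   four-group, the Kimura matrix is translation invariant, so all rows of
   Pi^m (x) Pi^m (x) Pi^m are permutations of one another.  The law of Z is the
   p(x')-mixture of the output laws of the deterministic hosts, and the mixing
   bound H(sum_x p_x Q_x) <= H(p) + sum_x p_x H(Q_x) gives
   R_c(p) <= max_x' [max H(Z | X' = x')] - h, with equality at the point mass
   on the maximising amino acid, where H(X') = 0. *)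

Section Supremum.
Context {R : realType}.

Lemma sup_max (E : set R) (a : R) : E a -> ubound E a -> sup E = a.
Proof.
move=> Ea ubEa; apply/le_anti; rewrite ge_sup //=; last by exists a.
by apply: sup_upper_bound => //; split; exists a.
Qed.

Lemma sup_image_subr (T : Type) (S : set T) (f : T -> R) (k : R) :
  has_sup [set f c | c in S] ->
  sup [set f c - k | c in S] = sup [set f c | c in S] - k.
Proof.
have hs1 : has_sup [set - k] by split; exists (- k) => // x ->.
move=> hs; rewrite -[in RHS](sup1 (- k)) -sup_sumE //.
apply: congr1; apply/seteqP; split=> x.
- by move=> [c Sc <-]; exists (f c); [exists c | exists (- k)].
- by move=> [_ [c Sc <-] [_ -> <-]]; exists c.
Qed.

End Supremum.

Section Entropy.
Context {R : realType}.

Lemma ln2_gt0 : 0 < ln (2 : R).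
Proof. by apply: ln_gt0; rewrite ltr1n. Qed.

Lemma log2_1 : log2 (1 : R) = 0.
Proof. by rewrite /log2 ln1 mul0r. Qed.

Lemma log2M (a b : R) : 0 < a -> 0 < b -> log2 (a * b) = log2 a + log2 b.
Proof. by move=> a0 b0; rewrite /log2 lnM ?posrE // mulrDl. Qed.

Lemma log2_div (a b : R) : 0 < a -> 0 < b -> log2 (a / b) = log2 a - log2 b.
Proof. by move=> a0 b0; rewrite /log2 ln_div ?posrE // mulrBl. Qed.

Lemma ler_log2 (a b : R) : 0 < a -> a <= b -> log2 a <= log2 b.
Proof.
move=> a0 ab; rewrite /log2 ler_pM2r ?invr_gt0 ?ln2_gt0 // ler_ln ?posrE //.
exact: lt_le_trans ab.
Qed.

Definition xlog2 (x : R) : R := if x == 0 then 0 else x * log2 x.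

Lemma entropyE (X : finType) (p : X -> R) : entropy p = - \sum_x xlog2 (p x).
Proof. by []. Qed.

Lemma xlog2M (a b : R) : 0 <= a -> 0 <= b ->
  xlog2 (a * b) = xlog2 a * b + a * xlog2 b.
Proof.
rewrite /xlog2 => a0 b0.
have [->|an0] := eqVneq a 0; first by rewrite !(mul0r, eqxx, add0r).
have [->|bn0] := eqVneq b 0; first by rewrite !(mulr0, eqxx, addr0).
rewrite mulf_eq0 (negbTE an0) (negbTE bn0) /= log2M ?lt_def ?an0 ?bn0 //.
ring.
Qed.

Lemma xlog2_le (a M : R) : 0 <= a -> a <= M -> 0 < M -> xlog2 a <= a * log2 M.
Proof.
rewrite /xlog2 => a0 aM M0; have [->|an0] := eqVneq a 0; first by rewrite mul0r.
by rewrite ler_pM2l ?ler_log2 ?lt_def ?an0.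
Qed.

Lemma xlog2_ge (x : R) : 0 <= x -> - (ln 2)^-1 <= xlog2 x.
Proof.
rewrite /xlog2 => x0; have [_|xn0] := eqVneq x 0.
  by rewrite oppr_le0 invr_ge0 ltW ?ln2_gt0.
have xp : 0 < x by rewrite lt_def xn0.
(* [ln (1/x) <= 1/x - 1] gives [x ln x >= x - 1 >= -1]. *)
have lnV_le : ln x^-1 <= x^-1 - 1.
  have gtm1 : -1 < x^-1 - 1 by have := invr_gt0 x; rewrite xp; lra.
  by have := le_ln1Dx gtm1; rewrite addrC subrK.
have xln_ge : -1 <= x * ln x.
  have := ler_wpM2l (ltW xp) lnV_le.
  rewrite lnV ?posrE // mulrN mulrBr mulfV ?gt_eqF //; lra.
rewrite /log2 mulrA ler_pdivlMr ?ln2_gt0 // mulNr mulVf ?gt_eqF ?ln2_gt0 //.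
Qed.

Lemma entropy_le_card (X : finType) (p : X -> R) :
  (forall x, 0 <= p x) -> entropy p <= #|X|%:R / ln 2.
Proof.
move=> p0; rewrite entropyE -sumrN.
apply: (@le_trans _ _ (\sum_(x : X) (ln (2 : R))^-1)).
  by apply: ler_sum => x _; rewrite lerNl xlog2_ge.
by rewrite sumr_const -[_ *+ _]mulr_natl.
Qed.

Lemma entropy_point (X : finType) (a : X) : entropy (fun x => (x == a)%:R : R) = 0.
Proof.
rewrite entropyE big1 ?oppr0 // => x _; rewrite /xlog2.
by case: (x == a); rewrite ?eqxx // oner_eq0 mul1r log2_1.
Qed.

Lemma xlog2_sum_le (I : finType) (a : I -> R) :
  (forall i, 0 <= a i) -> \sum_i xlog2 (a i) <= xlog2 (\sum_i a i).
Proof.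
move=> a0; have [s0|sn0] := eqVneq (\sum_i a i) 0.
  rewrite s0 /xlog2 eqxx big1 // => i _.
  by rewrite (psumr_eq0P (fun j _ => a0 j) s0) ?eqxx.
apply: (@le_trans _ _ (\sum_i a i * log2 (\sum_j a j))).
  apply: ler_sum => i _; apply: xlog2_le; rewrite ?a0 //.
    by rewrite (bigD1 i) //= lerDl sumr_ge0.
  by rewrite lt_def sn0 sumr_ge0.
by rewrite -mulr_suml /xlog2 (negbTE sn0).
Qed.

Lemma entropy_mix_le (I Z : finType) (p : I -> R) (Q : I -> Z -> R) :
  (forall i, 0 <= p i) -> (forall i z, 0 <= Q i z) -> (forall i, \sum_z Q i z = 1) ->
  entropy (fun z => \sum_i p i * Q i z) <= entropy p + \sum_i p i * entropy (Q i).
Proof.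
move=> p0 Q0 Q1; rewrite !entropyE.
have chain : \sum_z \sum_i xlog2 (p i * Q i z)
    = \sum_i xlog2 (p i) + \sum_i p i * \sum_z xlog2 (Q i z).
  rewrite exchange_big -big_split /=; apply: eq_bigr => i _.
  rewrite -[in RHS](mulr1 (xlog2 (p i))) -(Q1 i) !mulr_sumr -big_split /=.
  by apply: eq_bigr => z _; rewrite xlog2M.
have superadd : \sum_z \sum_i xlog2 (p i * Q i z) <= \sum_z xlog2 (\sum_i p i * Q i z).
  by apply: ler_sum => z _; apply: xlog2_sum_le => i; rewrite mulr_ge0.
under [X in _ <= _ + X]eq_bigr => i _ do rewrite mulrN.
rewrite sumrN; lra.
Qed.

End Entropy.

Lemma ord_to_baseK : cancel ord_to_base base_to_ord.
Proof. by move=> [[|[|[|[|n]]]] lt_n4]; apply: val_inj; rewrite /= ?inordK. Qed.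

Lemma sum_base (V : nmodType) (F : base -> V) :
  \sum_b F b = F A + F C + F T + F G.
Proof.
rewrite (reindex ord_to_base); last first.
  by exists base_to_ord => b _; [exact: ord_to_baseK | exact: base_to_ordK].
by rewrite !big_ord_recr big_ord0 /= add0r.
Qed.

Lemma eq_baseE (a b : base) :
  (a == b) = match a, b with A, A | C, C | T, T | G, G => true | _, _ => false end.
Proof. by case: a; case: b; rewrite ?eqxx //; apply/negbTE/eqP. Qed.

Lemma sum_codon (V : nmodType) (F : codon -> V) :
  \sum_z F z = \sum_a \sum_b \sum_c F (a, b, c).
Proof. by rewrite !pair_bigA; apply: eq_bigr => -[[a b] c]. Qed.

(* Bases form a Klein four-group with neutral element A; [klein_sub y] is the
   translation [z |-> z - y], which maps transitions to transitions. *)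
Definition klein_sub (y z : base) : base :=
  match y with
  | A => z
  | G => match z with A => G | G => A | C => T | T => C end
  | C => match z with A => C | C => A | G => T | T => G end
  | T => match z with A => T | T => A | G => C | C => G end
  end.

Lemma klein_subK y : involutive (klein_sub y). Proof. by case: y; case. Qed.

Lemma klein_sub_inj y : injective (klein_sub y).
Proof. exact: inv_inj (klein_subK y). Qed.

Lemma klein_subxx y : klein_sub y y = A. Proof. by case: y. Qed.

Lemma transition_klein_sub y a b :
  transition (klein_sub y a) (klein_sub y b) = transition a b.
Proof. by case: y; case: a; case: b. Qed.

Definition klein_subc (u z : codon) : codon :=
  (klein_sub u.1.1 z.1.1, klein_sub u.1.2 z.1.2, klein_sub u.2 z.2).

Lemma klein_subc_inj u : injective (klein_subc u).
Proof.
by move=> [[a b] c] [[a' b'] c'] [/klein_sub_inj -> /klein_sub_inj -> /klein_sub_inj ->].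
Qed.

Section KimuraChannel.
Variables (R : realType) (q gam : R).

Lemma Pi_klein_sub y a b : Pi q gam (klein_sub y a) (klein_sub y b) = Pi q gam a b.
Proof. by rewrite /Pi (inj_eq (klein_sub_inj y)) transition_klein_sub. Qed.

Lemma Pi_pow_klein_sub n y a b :
  Pi_pow q gam n (klein_sub y a) (klein_sub y b) = Pi_pow q gam n a b.
Proof.
elim: n a b => [|n IHn] a b /=; first by rewrite (inj_eq (klein_sub_inj y)).
rewrite (reindex_inj (klein_sub_inj y)); apply: eq_bigr => w _.
by rewrite IHn Pi_klein_sub.
Qed.

Lemma Pi_pow_klein_subA n y z :
  Pi_pow q gam n y z = Pi_pow q gam n A (klein_sub y z).
Proof. by rewrite -(klein_subxx y) Pi_pow_klein_sub. Qed.

Lemma W_klein_sub m u z : W q gam m u z = W q gam m (A, A, A) (klein_subc u z).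
Proof.
by rewrite /W (Pi_pow_klein_subA _ u.1.1) (Pi_pow_klein_subA _ u.1.2)
  (Pi_pow_klein_subA _ u.2).
Qed.

Lemma entropy_W m u : entropy (W q gam m u) = entropy (W q gam m (A, A, A)).
Proof.
rewrite !entropyE [in RHS](reindex_inj (klein_subc_inj u)).
by congr (- _); apply: eq_bigr => z _; rewrite W_klein_sub.
Qed.

Lemma Pi_rowsum y : \sum_z Pi q gam y z = 1.
Proof. by rewrite sum_base /Pi; case: y; rewrite !eq_baseE /=; ring. Qed.

Lemma Pi_pow_rowsum n y : \sum_z Pi_pow q gam n y z = 1.
Proof.
elim: n y => [|n IHn] y /=.
  by rewrite (bigD1 y) //= eqxx big1 ?addr0 // => z /negbTE; rewrite eq_sym => ->.
rewrite exchange_big /= -[RHS](IHn y); apply: eq_bigr => w _.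
by rewrite -mulr_sumr Pi_rowsum mulr1.
Qed.

Lemma W_rowsum m u : \sum_z W q gam m u z = 1.
Proof.
rewrite /W sum_codon /=.
under eq_bigr => a _ do under eq_bigr => b _ do
  rewrite -mulr_sumr Pi_pow_rowsum mulr1.
under eq_bigr => a _ do rewrite -mulr_sumr Pi_pow_rowsum mulr1.
exact: Pi_pow_rowsum.
Qed.

Hypotheses (hq : 0 <= q <= 1) (hg : 0 <= gam <= 3 / 2).

Lemma Pi_ge0 y z : 0 <= Pi q gam y z.
Proof.
move: hq hg => /andP[q0 q1] /andP[g0 g1]; rewrite /Pi.
case: ifP => _; first lra.
by case: ifP => _; rewrite !mulr_ge0 //; lra.
Qed.

Lemma Pi_pow_ge0 n y z : 0 <= Pi_pow q gam n y z.
Proof.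
elim: n y z => [|n IHn] y z /=; first by rewrite ler0n.
by apply: sumr_ge0 => w _; rewrite mulr_ge0 ?Pi_ge0.
Qed.

Lemma W_ge0 m u z : 0 <= W q gam m u z.
Proof. by rewrite /W !mulr_ge0 ?Pi_pow_ge0. Qed.

End KimuraChannel.

Lemma sum_indicator (R : pzSemiRingType) (X : finType) (a : X) (f : X -> R) :
  \sum_x (x == a)%:R * f x = f a.
Proof.
rewrite (bigD1 a) //= eqxx mul1r big1 ?addr0 // => x /negbTE ->.
by rewrite mul0r.
Qed.

Lemma delta_dist (R : realType) xi : is_dist (delta R xi).
Proof.
split=> [x|]; first by rewrite ler0n.
rewrite -[RHS](@sum_indicator R _ xi (fun=> 1)).
by apply: eq_bigr => x _; rewrite mulr1.
Qed.

Lemma entropy_delta (R : realType) xi : entropy (delta R xi) = 0.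
Proof. exact: entropy_point. Qed.

Section InputOutputLaws.
Variables (R : realType) (q gam : R) (m : nat) (c : aa -> codon -> R).
Hypothesis hc : is_cond c.

Lemma pU_sum (p : aa -> R) u : pU p c u = \sum_x p x * c x u.
Proof.
rewrite /pU (bigD1 (alpha u)) //= big1 ?addr0 // => x hx.
by rewrite (proj2 (hc x)) ?mulr0 // eq_sym.
Qed.

Lemma pU_delta xi u : pU (delta R xi) c u = c xi u.
Proof. by rewrite pU_sum sum_indicator. Qed.

Lemma pZ_mix p z : pZ q gam m p c z = \sum_x p x * pZ q gam m (delta R x) c z.
Proof.
rewrite /pZ; under eq_bigr do rewrite pU_sum mulr_suml.
rewrite exchange_big /=; apply: eq_bigr => x _.
by rewrite mulr_sumr; apply: eq_bigr => u _; rewrite pU_delta mulrA.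
Qed.

Variable p : aa -> R.
Hypothesis hp : is_dist p.

Lemma pU_ge0 u : 0 <= pU p c u.
Proof. by rewrite mulr_ge0 ?(proj1 hp) ?(proj1 (proj1 (hc _))). Qed.

Lemma pU_sum1 : \sum_u pU p c u = 1.
Proof.
under eq_bigr do rewrite pU_sum.
rewrite exchange_big /= -[RHS](proj2 hp); apply: eq_bigr => x _.
by rewrite -mulr_sumr (proj2 (proj1 (hc x))) mulr1.
Qed.

Lemma pZ_sum1 : \sum_z pZ q gam m p c z = 1.
Proof.
rewrite /pZ exchange_big /= -[RHS]pU_sum1; apply: eq_bigr => u _.
by rewrite -mulr_sumr W_rowsum mulr1.
Qed.

Hypotheses (hq : 0 <= q <= 1) (hg : 0 <= gam <= 3 / 2).

Lemma pZ_ge0 z : 0 <= pZ q gam m p c z.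
Proof. by apply: sumr_ge0 => u _; rewrite mulr_ge0 ?pU_ge0 ?W_ge0. Qed.

Lemma pU_W_le_pZ u z : pU p c u * W q gam m u z <= pZ q gam m p c z.
Proof.
rewrite /pZ (bigD1 u) //= lerDl sumr_ge0 // => v _.
by rewrite mulr_ge0 ?pU_ge0 ?W_ge0.
Qed.

Lemma mutinf_term u z :
  (if pU p c u * W q gam m u z == 0 then 0
   else pU p c u * W q gam m u z * log2 (W q gam m u z / pZ q gam m p c z))
  = pU p c u * xlog2 (W q gam m u z)
    - pU p c u * W q gam m u z * log2 (pZ q gam m p c z).
Proof.
have [pW0|pWn0] := eqVneq (pU p c u * W q gam m u z) 0.
  rewrite pW0 mul0r subr0.
  move/eqP: pW0; rewrite mulf_eq0 => /orP[/eqP->|/eqP W0]; first by rewrite mul0r.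
  by rewrite W0 /xlog2 eqxx mulr0.
have pWp : 0 < pU p c u * W q gam m u z by rewrite lt_def pWn0 mulr_ge0 ?pU_ge0 ?W_ge0.
have pZp : 0 < pZ q gam m p c z := lt_le_trans pWp (pU_W_le_pZ u z).
move: pWn0; rewrite mulf_eq0 negb_or => /andP[_ Wn0].
have Wp : 0 < W q gam m u z by rewrite lt_def Wn0 W_ge0.
by rewrite log2_div // /xlog2 (negbTE Wn0); ring.
Qed.

Lemma mutinf_eq :
  mutinf q gam m p c = entropy (pZ q gam m p c) - entropy (W q gam m (A, A, A)).
Proof.
rewrite /mutinf; under eq_bigr do under eq_bigr do rewrite mutinf_term.
under eq_bigr do rewrite sumrB -mulr_sumr.
rewrite sumrB exchange_big /=.
have -> : \sum_u pU p c u * \sum_z xlog2 (W q gam m u z)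
          = - entropy (W q gam m (A, A, A)).
  under eq_bigr => u _ do rewrite -[X in _ * X]opprK -entropyE entropy_W.
  by rewrite -mulr_suml pU_sum1 mul1r.
rewrite [X in _ - X](_ : _ = - entropy (pZ q gam m p c)); last first.
  rewrite entropyE opprK; apply: eq_bigr => z _; rewrite -mulr_suml /xlog2.
  by case: eqP => [Z0|//]; rewrite -[X in X * _]/(pZ q gam m p c z) Z0 mul0r.
lra.
Qed.

End InputOutputLaws.

Definition fibre_rep (x : aa) : codon :=
  match x with
  | Ala => (G, C, A) | Arg => (C, G, A) | Asn => (A, A, C) | Asp => (G, A, C)
  | Cys => (T, G, C) | Gln => (C, A, A) | Glu => (G, A, A) | Gly => (G, G, A)
  | His => (C, A, C) | Ile => (A, T, A) | Leu => (C, T, A) | Lys => (A, A, A)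
  | Met => (A, T, G) | Phe => (T, T, C) | Pro => (C, C, A) | Ser => (T, C, A)
  | Thr => (A, C, A) | Trp => (T, G, G) | Tyr => (T, A, C) | Val => (G, T, A)
  | Stp => (T, A, A) end.

Lemma alpha_fibre_rep x : alpha (fibre_rep x) = x. Proof. by case: x. Qed.

Lemma is_cond_fibre_rep (R : realType) :
  is_cond (fun x u => (u == fibre_rep x)%:R : R).
Proof.
move=> x; split.
  split=> [u|]; first by rewrite ler0n.
  rewrite -[RHS](@sum_indicator R _ (fibre_rep x) (fun=> 1)).
  by apply: eq_bigr => u _; rewrite mulr1.
by move=> u; case: (u =P fibre_rep x) => [->|//]; rewrite alpha_fibre_rep eqxx.
Qed.

Section Capacity.
Variables (R : realType) (q gam : R) (m : nat).
Hypotheses (hq : 0 <= q <= 1) (hg : 0 <= gam <= 3 / 2).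

Let c0 : aa -> codon -> R := fun x u => (u == fibre_rep x)%:R.
Let hc0 : is_cond c0 := is_cond_fibre_rep R.

Lemma has_sup_HZ x :
  has_sup [set entropy (pZ q gam m (delta R x) c) | c in @is_cond R].
Proof.
split; first by exists (entropy (pZ q gam m (delta R x) c0)), c0.
exists (#|codon|%:R / ln 2) => _ [c hc <-].
by apply: entropy_le_card => z; apply: pZ_ge0 => //; exact: delta_dist.
Qed.

Lemma entropy_pZ_le_HZmax x c : is_cond c ->
  entropy (pZ q gam m (delta R x) c) <= HZmax q gam m x.
Proof. by move=> hc; apply: (sup_upper_bound (has_sup_HZ x)); exists c. Qed.

Lemma rate_le_HZmax xi p c :
  (forall eta, HZmax q gam m eta <= HZmax q gam m xi) -> is_dist p -> is_cond c ->
  mutinf q gam m p c - entropy p <= HZmax q gam m xi - entropy (W q gam m (A, A, A)).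
Proof.
move=> hxi hp hc; rewrite mutinf_eq //.
suff : entropy (pZ q gam m p c) <= entropy p + HZmax q gam m xi by move=> ?; lra.
have [p0 p1] := hp; rewrite (funext (@pZ_mix _ q gam m c hc p)).
apply: le_trans (@entropy_mix_le _ _ _ p (fun x => pZ q gam m (delta R x) c) p0 _ _) _.
- by move=> x z; apply: pZ_ge0 => //; exact: delta_dist.
- by move=> x; apply: pZ_sum1 => //; exact: delta_dist.
rewrite lerD2l -[leRHS]mul1r -p1 mulr_suml; apply: ler_sum => x _.
by rewrite ler_wpM2l // (le_trans (entropy_pZ_le_HZmax x _ hc)).
Qed.

Lemma Rc_le xi p : (forall eta, HZmax q gam m eta <= HZmax q gam m xi) -> is_dist p ->
  Rc q gam m p <= HZmax q gam m xi - entropy (W q gam m (A, A, A)).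
Proof.
move=> hxi hp; apply: ge_sup; first by exists (mutinf q gam m p c0 - entropy p), c0.
by move=> _ [c hc <-]; exact: rate_le_HZmax.
Qed.

Lemma Rc_delta xi :
  Rc q gam m (delta R xi) = HZmax q gam m xi - entropy (W q gam m (A, A, A)).
Proof.
rewrite /Rc /HZmax -sup_image_subr; last exact: has_sup_HZ.
congr sup.
have hd := delta_dist R xi.
by apply: eq_imagel => c hc; rewrite mutinf_eq // entropy_delta subr0.
Qed.

End Capacity.

Theorem theorem1 (R : realType) (q gam : R) (m : nat) :
  0 <= q <= 1 -> 0 <= gam <= 3 / 2 -> (1 <= m)%N ->
  forall xi : aa,
    (forall eta : aa, HZmax q gam m eta <= HZmax q gam m xi) ->
    Cc q gam m = Rc q gam m (delta R xi).
Proof.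
move=> hq hg _ xi hxi.
apply: sup_max; first by exists (delta R xi) => //; exact: delta_dist.
by move=> _ [p hp <-]; rewrite Rc_delta //; exact: Rc_le.
Qed.
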